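(* Let $U:\mathbb R^m_{++}\to\mathbb R$ be a concave NDAS function and let $s^{opt}$ be a maximizer of $U$ over $B_s$. Let $w^0,w^1\in W$ have weighted centers $(x^0,y^0,s^0)$ and $(x^1,y^1,s^1)$, let $g^0,g^1$ be supergradients of $U$ at $s^0,s^1$, and set $g^{0w}=(Y^0)^{-1}g^0$, $g^{1w}=(Y^1)^{-1}g^1$. Then $$\{w:\ (g^{0w})^\top(w-w^0)\ge 0,\ (g^{1w})^\top(w-w^1)\ge 0\}\cap W_{s^{opt}}\neq\emptyset.$$
   Context: Let $A\in\mathbb R^{m\times n}$ have full column rank $n\le m$ and $b\in\mathbb R^m$ be such that $\{x:Ax\le b\}$ is bounded with nonempty interior. For $w\in\mathbb R^m_{++}$ the weighted center of $w$ is the unique $(x,y,s)$ with $Ax+s=b$, $s>0$, $A^\top y=0$, $\mathrm{Diag}(s)y=w$ ($s$-vector $s$, $y$-vector $y$). Capital letters denote diagonal matrices of vectors. $W=\{w\in\mathbb R^m:w>0,\ e^\top w=1\}$. Centric $s$-vectors are $s$-vectors of weighted centers of elements of $W$; $B_s$ is their set; for centric $s$, $W_s=\{w\in W:$ the $s$-vector of $w$ is $s\}$. Supergradient of concave $U$ at $s^0$: $g$ with $U(s)\le U(s^0)+g^\top(s-s^0)$ for all $s$. A function $f:\mathbb R^m_{++}\to\mathbb R$ is NDAS (non-decreasing under affine scaling) if for every $d\in\mathbb R^m_{++}$, with $D=\mathrm{Diag}(d)$: (1) $f(s)\le\max\{f(Ds),f(D^{-1}s)\}$ for all $s\in\mathbb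 R^m_{++}$; (2) if $f(s^0)\le f(Ds^0)$ for a single $s^0\in\mathbb R^m_{++}$, then $f(s)\le f(Ds)$ for all $s\in\mathbb R^m_{++}$. *)

(* classical reals. Vectors in R^k are functions nat -> R,
   of which only the coordinates 0..k-1 are meaningful; matrices are
   functions nat -> nat -> R. *)
From Stdlib Require Import Reals.
Open Scope R_scope.

Definition vec := nat -> R.
Definition mat := nat -> nat -> R.

Fixpoint sumR (k : nat) (f : nat -> R) : R :=
  match k with
  | O => 0
  | S k' => sumR k' f + f k'
  end.

Definition dot (k : nat) (u v : vec) : R := sumR k (fun i => u i * v i).

Definition matvec (n : nat) (A : mat) (x : vec) : vec :=
  fun i => sumR n (fun j => A i j * x j).

Definition tmatvec (m : nat) (A : mat) (y : vec) : vec :=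
  fun j => sumR m (fun i => A i j * y i).

Definition posvec (k : nat) (v : vec) : Prop := forall i, (i < k)%nat -> 0 < v i.

Definition full_column_rank (m n : nat) (A : mat) : Prop :=
  forall x : vec, (forall i, (i < m)%nat -> matvec n A x i = 0) ->
                  forall j, (j < n)%nat -> x j = 0.

Definition feasible (m n : nat) (A : mat) (b : vec) (x : vec) : Prop :=
  forall i, (i < m)%nat -> matvec n A x i <= b i.

Definition poly_bounded (m n : nat) (A : mat) (b : vec) : Prop :=
  exists M : R, forall x, feasible m n A b x -> forall j, (j < n)%nat -> Rabs (x j) <= M.

Definition poly_nonempty_interior (m n : nat) (A : mat) (b : vec) : Prop :=
  exists (x0 : vec) (eps : R), 0 < eps /\
    forall x, (forall j, (j < n)%nat -> Rabs (x j - x0 j) < eps) -> feasible m n A b x.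

Definition weighted_center (m n : nat) (A : mat) (b : vec) (w x y s : vec) : Prop :=
  (forall i, (i < m)%nat -> matvec n A x i + s i = b i) /\
  posvec m s /\
  (forall j, (j < n)%nat -> tmatvec m A y j = 0) /\
  (forall i, (i < m)%nat -> s i * y i = w i).

Definition inW (m : nat) (w : vec) : Prop := posvec m w /\ sumR m w = 1.

(* the s-vector of the weighted center of w is s
   (the weighted center is unique under the standing assumptions) *)
Definition s_vector_of (m n : nat) (A : mat) (b : vec) (w s : vec) : Prop :=
  exists x y, weighted_center m n A b w x y s.

Definition centric (m n : nat) (A : mat) (b : vec) (s : vec) : Prop :=
  exists w, inW m w /\ s_vector_of m n A b w s.

Definition inWs (m n : nat) (A : mat) (b : vec) (s w : vec) : Prop :=
  inW m w /\ s_vector_of m n A b w s.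

(* U is a function of the first k coordinates only (it is a function on R^k) *)
Definition depends_on_first (k : nat) (U : vec -> R) : Prop :=
  forall s t, (forall i, (i < k)%nat -> s i = t i) -> U s = U t.

Definition concave_on_pos (k : nat) (U : vec -> R) : Prop :=
  forall s t (l : R), posvec k s -> posvec k t -> 0 <= l <= 1 ->
    l * U s + (1 - l) * U t <= U (fun i => l * s i + (1 - l) * t i).

Definition supergradient (k : nat) (U : vec -> R) (s0 g : vec) : Prop :=
  forall s, posvec k s -> U s <= U s0 + dot k g (fun i => s i - s0 i).

Definition dscale (d s : vec) : vec := fun i => d i * s i.
Definition dscale_inv (d s : vec) : vec := fun i => s i / d i.

Definition NDAS (k : nat) (f : vec -> R) : Prop :=
  forall d, posvec k d ->
    (forall s, posvec k s -> f s <= Rmax (f (dscale d s)) (f (dscale_inv d s))) /\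
    ((exists s0, posvec k s0 /\ f s0 <= f (dscale d s0)) ->
       forall s, posvec k s -> f s <= f (dscale d s)).

(* Strategy.
   - Duality: if A x + s = b and A^T y = 0 then s^T y = b^T y.  Hence for the
     center (x, y, s) of w in W and any centric sopt, the vector sopt o y
     (componentwise product) has the same dual vector y and sums to
     s^T y = e^T w = 1, so sopt o y lies in W_{sopt}.
   - Change of variables: the cut (g/y)^T (sopt o y' - w) >= 0 at a center
     (x, y, s) of w equals g^T (t - s) with t = sopt o y' / y; by the
     supergradient inequality it holds as soon as U s <= U t.
   - NDAS with the scaling d = y1 / y0 gives U sopt <= U (sopt o y1 / y0) or
     U sopt <= U (sopt o y0 / y1).  In the first case w = sopt o y1 satisfies
     both cuts (using U s0, U s1 <= U sopt); the second case is symmetric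
     with w = sopt o y0. *)
From Stdlib Require Import Reals Lra Lia.
Open Scope R_scope.

Lemma sumR_ext k f g :
  (forall i, (i < k)%nat -> f i = g i) -> sumR k f = sumR k g.
Proof.
  induction k as [|k IH]; simpl; intros H; [reflexivity|].
  rewrite IH by (intros; apply H; lia). rewrite H by lia. reflexivity.
Qed.

Lemma sumR_plus k f g : sumR k (fun i => f i + g i) = sumR k f + sumR k g.
Proof. induction k as [|k IH]; simpl; [lra | rewrite IH; lra]. Qed.

Lemma sumR_scal k c f : sumR k (fun i => c * f i) = c * sumR k f.
Proof. induction k as [|k IH]; simpl; [lra | rewrite IH; lra]. Qed.

Lemma sumR_zero k f : (forall i, (i < k)%nat -> f i = 0) -> sumR k f = 0.
Proof.
  intros H. rewrite (sumR_ext k f (fun _ => 0 * 0))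
    by (intros i Hi; rewrite H by exact Hi; ring).
  rewrite sumR_scal. ring.
Qed.

Lemma sumR_swap m n (f : nat -> nat -> R) :
  sumR m (fun i => sumR n (fun j => f i j)) = sumR n (fun j => sumR m (fun i => f i j)).
Proof.
  induction m as [|m IH]; simpl.
  - symmetry. apply sumR_zero. reflexivity.
  - rewrite IH, <- sumR_plus. reflexivity.
Qed.

Lemma matvec_transpose m n A x y :
  dot m (matvec n A x) y = dot n x (tmatvec m A y).
Proof.
  unfold dot, matvec, tmatvec.
  transitivity (sumR m (fun i => sumR n (fun j => A i j * x j * y i))).
  { apply sumR_ext; intros i _. rewrite Rmult_comm, <- sumR_scal.
    apply sumR_ext; intros; ring. }
  rewrite sumR_swap. apply sumR_ext; intros j _.
  rewrite <- sumR_scal. apply sumR_ext; intros; ring.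
Qed.

(* Weak duality as an identity: a slack of A x <= b and a dual vector with
   A^T y = 0 pair to b^T y, independently of x. *)
Lemma slack_dual_pairing m n A b x s y :
  (forall i, (i < m)%nat -> matvec n A x i + s i = b i) ->
  (forall j, (j < n)%nat -> tmatvec m A y j = 0) ->
  dot m s y = dot m b y.
Proof.
  intros Hslack Hdual.
  assert (Hnull : dot m (matvec n A x) y = 0).
  { rewrite matvec_transpose. apply sumR_zero. intros j Hj.
    rewrite Hdual by exact Hj. ring. }
  unfold dot in *. rewrite <- (Rplus_0_l (sumR m (fun i => s i * y i))), <- Hnull.
  rewrite <- sumR_plus. apply sumR_ext. intros i Hi. rewrite <- (Hslack i Hi). ring.
Qed.

Lemma posvec_mult k u v : posvec k u -> posvec k v -> posvec k (fun i => u i * v i).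
Proof. intros Hu Hv i Hi. apply Rmult_lt_0_compat; auto. Qed.

Lemma posvec_div k u v : posvec k u -> posvec k v -> posvec k (fun i => u i / v i).
Proof. intros Hu Hv i Hi. apply Rdiv_lt_0_compat; auto. Qed.

Lemma supergradient_ascent k U s g t :
  supergradient k U s g -> posvec k t -> U s <= U t ->
  dot k g (fun i => t i - s i) >= 0.
Proof. intros Hg Ht Hst. specialize (Hg t Ht). lra. Qed.

Lemma NDAS_dichotomy k U d s :
  NDAS k U -> posvec k d -> posvec k s ->
  U s <= U (dscale d s) \/ U s <= U (dscale_inv d s).
Proof.
  intros HU Hd Hs. apply Rmax_Rle. exact (proj1 (HU d Hd) s Hs).
Qed.

Section WeightedCenters.

Variables (m n : nat) (A : mat) (b : vec).

Lemma center_dual_pos w x y s :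
  posvec m w -> weighted_center m n A b w x y s -> posvec m y.
Proof.
  intros Hw (_ & Hs & _ & Hsy) i Hi.
  specialize (Hw i Hi). specialize (Hs i Hi). rewrite <- (Hsy i Hi) in Hw.
  destruct (Rlt_le_dec 0 (y i)) as [Hy|Hy]; [exact Hy|].
  assert (s i * y i <= 0) by nra. lra.
Qed.

Lemma centric_pos s : centric m n A b s -> posvec m s.
Proof. intros (? & _ & ? & ? & _ & Hpos & _). exact Hpos. Qed.

Lemma rescaled_weight_in_Ws sopt w x y s :
  centric m n A b sopt -> inW m w -> weighted_center m n A b w x y s ->
  inWs m n A b sopt (fun i => sopt i * y i).
Proof.
  intros [w' [_ [xo [yo (Hslack_o & Hpos_o & _ & _)]]]] Hw Hc.
  pose proof (center_dual_pos w x y s (proj1 Hw) Hc) as Hy.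
  destruct Hc as (Hslack & _ & Hdual & Hsy).
  split; [split|].
  - exact (posvec_mult m sopt y Hpos_o Hy).
  - change (dot m sopt y = 1).
    rewrite (slack_dual_pairing m n A b xo sopt y Hslack_o Hdual),
            <- (slack_dual_pairing m n A b x s y Hslack Hdual).
    rewrite <- (proj2 Hw). apply sumR_ext. exact Hsy.
  - exists xo, y. repeat split; auto.
Qed.

Variables (U : vec -> R) (sopt : vec).

Lemma weight_cut_contains w x y s g yt t :
  posvec m w -> weighted_center m n A b w x y s -> supergradient m U s g ->
  (forall i, (i < m)%nat -> t i = sopt i * yt i / y i) ->
  posvec m t -> U s <= U t ->
  dot m (fun i => g i / y i) (fun i => sopt i * yt i - w i) >= 0.
Proof.
  intros Hw Hc Hg Ht Htpos Hst.
  pose proof (center_dual_pos w x y s Hw Hc) as Hy.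
  destruct Hc as (_ & _ & _ & Hsy).
  replace (dot m (fun i => g i / y i) (fun i => sopt i * yt i - w i))
    with (dot m g (fun i => t i - s i)).
  - exact (supergradient_ascent m U s g t Hg Htpos Hst).
  - unfold dot. apply sumR_ext. intros i Hi.
    rewrite Ht, <- Hsy by exact Hi. specialize (Hy i Hi). field. lra.
Qed.

Lemma rescaled_opt_meets_cuts w0 x0 y0 s0 g0 w1 x1 y1 s1 g1 t :
  inW m w0 -> weighted_center m n A b w0 x0 y0 s0 -> supergradient m U s0 g0 ->
  inW m w1 -> weighted_center m n A b w1 x1 y1 s1 -> supergradient m U s1 g1 ->
  centric m n A b sopt -> U s0 <= U sopt -> U s1 <= U sopt ->
  (forall i, (i < m)%nat -> t i = sopt i * y1 i / y0 i) ->
  posvec m t -> U sopt <= U t ->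
  dot m (fun i => g0 i / y0 i) (fun i => sopt i * y1 i - w0 i) >= 0 /\
  dot m (fun i => g1 i / y1 i) (fun i => sopt i * y1 i - w1 i) >= 0 /\
  inWs m n A b sopt (fun i => sopt i * y1 i).
Proof.
  intros Hw0 Hc0 Hg0 Hw1 Hc1 Hg1 Hcentric HU0 HU1 Ht Htpos Hopt_t.
  pose proof (center_dual_pos w1 x1 y1 s1 (proj1 Hw1) Hc1) as Hy1.
  split; [|split].
  - apply (weight_cut_contains w0 x0 y0 s0 g0 y1 t); auto.
    + exact (proj1 Hw0).
    + lra.
  - apply (weight_cut_contains w1 x1 y1 s1 g1 y1 sopt); auto.
    + exact (proj1 Hw1).
    + intros i Hi. specialize (Hy1 i Hi). field. lra.
    + exact (centric_pos sopt Hcentric).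
  - exact (rescaled_weight_in_Ws sopt w1 x1 y1 s1 Hcentric Hw1 Hc1).
Qed.

End WeightedCenters.

Theorem proposition3p1
  (m n : nat) (A : mat) (b : vec)
  (Hnm : (n <= m)%nat)
  (Hrank : full_column_rank m n A)
  (Hbdd : poly_bounded m n A b)
  (Hint : poly_nonempty_interior m n A b)
  (U : vec -> R)
  (HUfun : depends_on_first m U)
  (HUconc : concave_on_pos m U)
  (HUndas : NDAS m U)
  (sopt : vec)
  (Hsopt : centric m n A b sopt /\
           forall s, centric m n A b s -> U s <= U sopt)
  (w0 w1 x0 y0 s0 x1 y1 s1 g0 g1 : vec)
  (Hw0 : inW m w0) (Hw1 : inW m w1)
  (Hc0 : weighted_center m n A b w0 x0 y0 s0)
  (Hc1 : weighted_center m n A b w1 x1 y1 s1)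
  (Hg0 : supergradient m U s0 g0)
  (Hg1 : supergradient m U s1 g1) :
  let g0w := fun i => g0 i / y0 i in
  let g1w := fun i => g1 i / y1 i in
  exists w : vec,
    dot m g0w (fun i => w i - w0 i) >= 0 /\
    dot m g1w (fun i => w i - w1 i) >= 0 /\
    inWs m n A b sopt w.
Proof.
  intros g0w g1w.
  destruct Hsopt as [Hcentric Hmax].
  pose proof (centric_pos m n A b sopt Hcentric) as Hsopt_pos.
  assert (HU0 : U s0 <= U sopt) by (apply Hmax; exists w0; split; [|exists x0, y0]; auto).
  assert (HU1 : U s1 <= U sopt) by (apply Hmax; exists w1; split; [|exists x1, y1]; auto).
  pose proof (center_dual_pos m n A b w0 x0 y0 s0 (proj1 Hw0) Hc0) as Hy0.
  pose proof (center_dual_pos m n A b w1 x1 y1 s1 (proj1 Hw1) Hc1) as Hy1.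
  set (d := fun i => y1 i / y0 i).
  assert (Hd : posvec m d) by exact (posvec_div m y1 y0 Hy1 Hy0).
  destruct (NDAS_dichotomy m U d sopt HUndas Hd Hsopt_pos) as [Hscale | Hscale].
  -
    exists (fun i => sopt i * y1 i).
    apply (rescaled_opt_meets_cuts m n A b U sopt w0 x0 y0 s0 g0 w1 x1 y1 s1 g1
             (dscale d sopt)); auto.
    + intros i Hi. unfold dscale, d. specialize (Hy0 i Hi). field. lra.
    + exact (posvec_mult m d sopt Hd Hsopt_pos).
  -
    exists (fun i => sopt i * y0 i).
    destruct (rescaled_opt_meets_cuts m n A b U sopt w1 x1 y1 s1 g1 w0 x0 y0 s0 g0
                (dscale_inv d sopt)) as (Hcut1 & Hcut0 & HinWs); auto.
    + intros i Hi. unfold dscale_inv, d.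
      specialize (Hy0 i Hi). specialize (Hy1 i Hi). field. lra.
    + exact (posvec_div m sopt d Hsopt_pos Hd).
Qed.
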